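(* Let $f(z)=e^z$, let $z_0\in\mathbb{C}$ satisfy $f^n(z_0)\to\infty$, set $z_n=f^n(z_0)$ and $D_n=D_{2\pi}(z_n)$ for $n\geq1$. Then there exist $n_0\in\mathbb{N}$ and holomorphic maps $\phi_n\colon D_n\to\mathbb{C}$, $n\geq n_0$, such that: (a) $\phi_n(z_n)=z_0$; (b) $f^n(\phi_n(z))=z$ for all $z\in D_n$; (c) $\sup_{z\in D_n}|\phi_n'(z)|\to0$ as $n\to\infty$; (d) $\mathrm{diam}(\phi_n(D_n))\to0$ as $n\to\infty$.
   Context: $D_r(w)$ denotes the open Euclidean disc of radius $r$ centred at $w$; $f^n$ is the $n$-th iterate. *)

From Stdlib Require Import Reals.
Open Scope R_scope.

Definition Cplx : Type := (R * R)%type.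

Definition Cadd (z w : Cplx) : Cplx := (fst z + fst w, snd z + snd w).
Definition Csub (z w : Cplx) : Cplx := (fst z - fst w, snd z - snd w).
Definition Cmul (z w : Cplx) : Cplx :=
  (fst z * fst w - snd z * snd w, fst z * snd w + snd z * fst w).
Definition Cmod (z : Cplx) : R := sqrt (fst z ^ 2 + snd z ^ 2).

Definition Cexp (z : Cplx) : Cplx := (exp (fst z) * cos (snd z), exp (fst z) * sin (snd z)).

Definition iter (n : nat) (f : Cplx -> Cplx) (z : Cplx) : Cplx := Nat.iter n f z.

Definition in_disc (r : R) (w z : Cplx) : Prop := Cmod (Csub z w) < r.

Definition cderiv_at (f : Cplx -> Cplx) (z d : Cplx) : Prop :=
  forall eps, 0 < eps -> exists delta, 0 < delta /\
    forall h, 0 < Cmod h < delta ->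
      Cmod (Csub (Csub (f (Cadd z h)) (f z)) (Cmul h d)) <= eps * Cmod h.

Definition escapes (f : Cplx -> Cplx) (z0 : Cplx) : Prop :=
  forall M, exists N, forall n, (N <= n)%nat -> M < Cmod (iter n f z0).

(* Around each orbit point z_(k+1) = e^(z_k), the map w |-> z_k + Log (w / z_(k+1)) is an
   inverse branch of exp on the disc of radius |z_(k+1)|/40, with derivative 1/w of modulus at
   most 2/|z_(k+1)|.  Composing these branches back along the orbit defines phi_n on D_n, and
   the k-th partial composite maps D_n into the disc of radius 2 pi prod_(j=k+1..n) 2/|z_j|
   about z_k.  Once |z_j| >= 80 pi for j >= m, every factor is at most 1/2: the products are
   at most 1 for k >= m and tend to 0 for each of the finitely many k < m, so for large n each
   image stays inside the domain of the next branch.  The product for k = 0 then bounds both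
   |phi_n'| and the diameter of phi_n(D_n). *)

From Stdlib Require Import Reals Lra Lia.
From Coquelicot Require Import Rcomplements Complex Hierarchy.
Open Scope R_scope.

(** * Real estimates near 0 *)

Lemma sin_bounds_01 a : 0 <= a <= 1 -> a - a ^ 3 / 6 <= sin a <= a.
Proof.
  intros Ha; destruct (pre_sin_bound a 0 ltac:(lra) ltac:(lra)) as [Hlo Hhi].
  replace (sin_approx a (2 * 0 + 1)) with (a - a ^ 3 / 6) in Hlo
    by (unfold sin_approx, sin_term; simpl; field).
  replace (sin_approx a (2 * (0 + 1))) with (a - a ^ 3 / 6 + a ^ 5 / 120) in Hhi
    by (unfold sin_approx, sin_term; simpl; field).
  assert (a ^ 5 <= a ^ 3).
  { replace (a ^ 5) with (a ^ 3 * (a * a)) by ring.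
    assert (0 <= a ^ 3) by (apply pow_le; lra).
    assert (a * a <= 1) by nra.
    nra. }
  split; lra.
Qed.

Lemma sin_near0 y : Rabs y <= 1 -> Rabs (sin y - y) <= y ^ 2 /\ Rabs (sin y) <= Rabs y.
Proof.
  intros Hy; destruct (Rle_lt_dec 0 y) as [Hpos | Hneg].
  - rewrite Rabs_right in Hy by lra; destruct (sin_bounds_01 y ltac:(lra)).
    assert (0 <= sin y) by (simpl in *; nra).
    split; [apply Rabs_le; simpl in *; nra | rewrite !Rabs_right; lra].
  - rewrite Rabs_left in Hy by lra; destruct (sin_bounds_01 (- y) ltac:(lra)).
    rewrite sin_neg in *.
    assert (0 <= - sin y) by (simpl in *; nra).
    split; [apply Rabs_le; simpl in *; nra | rewrite !Rabs_left1; lra].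
Qed.

Lemma cos_near0 y : Rabs y <= 1 -> Rabs (cos y - 1) <= y ^ 2 / 2.
Proof.
  intros Hy; apply Rabs_le_between in Hy.
  assert (3 < PI) by (generalize PI2_3_2; lra).
  destruct (COS y ltac:(lra) ltac:(lra)) as [Hlo _].
  replace (cos_lb y) with (1 - y ^ 2 / 2 + y ^ 4 / 24 - y ^ 6 / 720) in Hlo
    by (unfold cos_lb, cos_approx, cos_term; simpl; field).
  assert (cos y <= 1) by apply COS_bound.
  assert (0 <= y * y <= 1) by nra.
  apply Rabs_le; simpl; nra.
Qed.

Lemma exp_near0 x : Rabs x <= 1/2 ->
  0 <= exp x - 1 - x <= 2 * x ^ 2 /\ Rabs (exp x - 1) <= 2 * Rabs x.
Proof.
  intros Hx; apply Rabs_le_between in Hx.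
  assert (Hlo := exp_ineq1_le x); assert (Hlo' := exp_ineq1_le (- x)).
  assert (exp x * exp (- x) = 1) by (rewrite <- exp_plus, Rplus_opp_r; apply exp_0).
  assert (Hup : exp x * (1 - x) <= 1) by (generalize (exp_pos x); nra).
  assert (exp x - 1 - x <= 2 * x ^ 2) by (simpl; nra).
  split; [lra |].
  destruct (Rle_lt_dec 0 x); [rewrite (Rabs_right x) | rewrite (Rabs_left x)]; try lra;
    apply Rabs_le; simpl in *; nra.
Qed.

Lemma ln_le_sub1 x : 0 < x -> ln x <= x - 1.
Proof.
  intros Hx; rewrite <- (exp_ln x) at 2 by lra.
  generalize (exp_ineq1_le (ln x)); lra.
Qed.

Lemma atan_near0 s : Rabs s <= 1/39 -> Rabs (atan s) < 1/32.
Proof.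
  intros Hs; apply Rabs_le_between in Hs.
  assert (3 < PI) by (generalize PI2_3_2; lra).
  destruct (sin_bounds_01 (1/32) ltac:(lra)) as [Hsin _].
  assert (0 < cos (1/32) <= 1) by (split; [apply cos_gt_0 | apply COS_bound]; lra).
  assert (Htan : 1/39 < tan (1/32)).
  { unfold tan; apply (Rmult_lt_reg_r (cos (1/32))); [lra |].
    field_simplify; [simpl in Hsin; nra | lra]. }
  assert (Hat : atan (tan (1/32)) = 1/32) by (apply atan_tan; lra).
  assert (atan s < 1/32) by (rewrite <- Hat; apply atan_increasing; lra).
  assert (atan (- s) < 1/32) by (rewrite <- Hat; apply atan_increasing; lra).
  rewrite atan_opp in *; apply Rabs_def1; lra.
Qed.

Open Scope C_scope.

(** * Exponential and logarithm *)

Lemma im_le_Cmod z : Rabs (Im z) <= Cmod z.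
Proof. exact (Rle_trans _ _ _ (Rmax_r _ _) (Rmax_Cmod z)). Qed.

Lemma Cmod_le_Re_Im z : Cmod z <= Rabs (Re z) + Rabs (Im z).
Proof.
  unfold Cmod; rewrite <- (sqrt_pow2 (Rabs (Re z) + Rabs (Im z)))
    by (generalize (Rabs_pos (Re z)) (Rabs_pos (Im z)); lra).
  apply sqrt_le_1_alt; rewrite <- (pow2_abs (fst z)), <- (pow2_abs (snd z)).
  generalize (Rabs_pos (fst z)) (Rabs_pos (snd z)); unfold Re, Im; nra.
Qed.

Lemma Cmod_sub_sym a b : Cmod (a - b) = Cmod (b - a).
Proof. rewrite <- Cmod_opp; f_equal; ring. Qed.

Lemma Cmod_sub_ge a b : Cmod a - Cmod b <= Cmod (a - b).
Proof.
  generalize (Cmod_triangle (a - b) b).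
  replace (a - b + b) with a by ring; lra.
Qed.

Lemma Cmod_sub_le a b : Cmod (a - b) <= Cmod a + Cmod b.
Proof. rewrite <- (Cmod_opp b); apply Cmod_triangle. Qed.

Lemma Cmod_sub_triangle a b c : Cmod (a - c) <= Cmod (a - b) + Cmod (b - c).
Proof. replace (a - c) with ((a - b) + (b - c)) by ring; apply Cmod_triangle. Qed.

Lemma Cexp_add a b : Cexp (a + b) = Cexp a * Cexp b.
Proof.
  destruct a as [x y], b as [u v]; unfold Cexp, Cplus, Cmult; simpl.
  rewrite exp_plus, cos_plus, sin_plus; f_equal; ring.
Qed.

Lemma Cmod_Cexp a : Cmod (Cexp a) = exp (Re a).
Proof.
  unfold Cmod, Cexp, Re; simpl.
  replace (_ * (_ * 1) + _ * (_ * 1))%R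
    with (exp (fst a) * exp (fst a) * ((sin (snd a))² + (cos (snd a))²))%R
    by (unfold Rsqr; ring).
  rewrite sin2_cos2, Rmult_1_r; apply sqrt_square.
  generalize (exp_pos (fst a)); lra.
Qed.

Lemma Cmod_Cexp_pos a : 0 < Cmod (Cexp a).
Proof. rewrite Cmod_Cexp; apply exp_pos. Qed.

Lemma Cexp_neq0 a : Cexp a <> RtoC 0.
Proof. apply Cmod_gt_0, Cmod_Cexp_pos. Qed.

Lemma Cexp_taylor1 k : Cmod k <= 1/2 -> Cmod (Cexp k - 1 - k) <= 4 * Cmod k ^ 2.
Proof.
  intros Hk; destruct k as [x y].
  assert (Hx := re_le_Cmod (x, y)); assert (Hy := im_le_Cmod (x, y)).
  rewrite Cmod2_alt; unfold Re, Im in *; simpl in *.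
  eapply Rle_trans; [apply Cmod_le_Re_Im |]; unfold Cexp, Re, Im; simpl.
  destruct (exp_near0 x ltac:(lra)) as [Ex Ex'].
  destruct (sin_near0 y ltac:(lra)) as [Sy Sy'].
  assert (Cy := cos_near0 y ltac:(lra)).
  assert (exp x <= 2) by (apply Rabs_le_between in Ex'; lra).
  assert (Hxy : 2 * Rabs x * Rabs y <= x ^ 2 + y ^ 2)
    by (rewrite <- (pow2_abs x), <- (pow2_abs y);
        generalize (pow2_ge_0 (Rabs x - Rabs y)); simpl; lra).
  assert (0 <= x ^ 2) by apply pow2_ge_0; assert (0 <= y ^ 2) by apply pow2_ge_0.
  assert (Re_part : Rabs (exp x * cos y + - (1) + - x) <= 2 * (x ^ 2 + y ^ 2)).
  { replace (exp x * cos y + - (1) + - x)%R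
      with (exp x * (cos y - 1) + (exp x - 1 - x))%R by ring.
    eapply Rle_trans; [apply Rabs_triang |].
    rewrite Rabs_mult, (Rabs_right (exp x)), (Rabs_right (exp x - 1 - x))
      by (generalize (exp_pos x); lra).
    assert (exp x * Rabs (cos y - 1) <= 2 * (y ^ 2 / 2))
      by (generalize (exp_pos x); intros; apply Rmult_le_compat; try lra; apply Rabs_pos).
    lra. }
  assert (Im_part : Rabs (exp x * sin y + - 0 + - y) <= 2 * (x ^ 2 + y ^ 2)).
  { replace (exp x * sin y + - 0 + - y)%R
      with ((exp x - 1) * sin y + (sin y - y))%R by ring.
    eapply Rle_trans; [apply Rabs_triang |]; rewrite Rabs_mult.
    assert (Rabs (exp x - 1) * Rabs (sin y) <= 2 * Rabs x * Rabs y)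
      by (apply Rmult_le_compat; try apply Rabs_pos; lra).
    lra. }
  lra.
Qed.

Lemma Cexp_sub1_lower k : Cmod k <= 1/8 -> Cmod k / 2 <= Cmod (Cexp k - 1).
Proof.
  intros Hk; assert (Hq := Cexp_taylor1 k ltac:(lra)).
  generalize (Cmod_sub_ge k (Cexp k - 1)); rewrite (Cmod_sub_sym k).
  assert (0 <= Cmod k) by apply Cmod_ge_0.
  assert (Cmod k ^ 2 <= Cmod k / 8) by (simpl; nra).
  lra.
Qed.

(** Agrees with the principal logarithm only on the half-plane [Re u > 0]. *)
Definition Log (u : C) : C := (ln (Cmod u), atan (Im u / Re u)).

Lemma Cexp_Log u : 0 < Re u -> Cexp (Log u) = u.
Proof.
  destruct u as [x y]; unfold Cexp, Log, Re, Im; simpl; intros Hx.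
  assert (Hm : Cmod (x, y) = (x * sqrt (1 + (y / x)²))%R).
  { rewrite <- (sqrt_square x) at 2 by lra; rewrite <- sqrt_mult_alt by nra.
    unfold Cmod; simpl; f_equal; unfold Rsqr; field; lra. }
  assert (0 < sqrt (1 + (y / x)²)) by (apply sqrt_lt_R0; generalize (Rle_0_sqr (y / x)); lra).
  rewrite exp_ln by (rewrite Hm; nra).
  rewrite cos_atan, sin_atan, Hm; f_equal; field; lra.
Qed.

Lemma Log_1 : Log 1 = 0.
Proof.
  unfold Log; rewrite Cmod_1, ln_1; unfold Re, Im; simpl.
  rewrite Rdiv_0_l, atan_0; reflexivity.
Qed.

Lemma Log_near1 u : Cmod (u - 1) < 1/40 -> 0 < Re u /\ Cmod (Log u) <= 1/16.
Proof.
  intros Hu.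
  assert (Hre := re_le_Cmod (u - 1)); assert (Him := im_le_Cmod (u - 1)).
  assert (Hlo := Cmod_sub_ge 1 u); assert (Hhi := Cmod_sub_ge u 1).
  rewrite Cmod_sub_sym, Cmod_1 in Hlo; rewrite Cmod_1 in Hhi.
  destruct u as [x y]; unfold Re, Im in *; simpl in *.
  rewrite Rabs_le_between in Hre, Him.
  split; [lra |].
  eapply Rle_trans; [apply Cmod_le_Re_Im |]; unfold Log, Re, Im; simpl.
  assert (Hln : Rabs (ln (Cmod (x, y))) <= 1/39).
  { apply Rabs_le_between; split.
    - assert (Hinv : ln (/ Cmod (x, y)) <= / Cmod (x, y) - 1)
        by (apply ln_le_sub1, Rinv_0_lt_compat; lra).
      rewrite ln_Rinv in Hinv by lra.
      assert (/ Cmod (x, y) < 40/39).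
      { apply (Rmult_lt_reg_r (Cmod (x, y))); [lra |]; rewrite Rinv_l; lra. }
      lra.
    - generalize (ln_le_sub1 (Cmod (x, y)) ltac:(lra)); lra. }
  assert (Hat : Rabs (atan (y / x)) < 1/32).
  { apply atan_near0; unfold Rdiv; rewrite Rabs_mult, Rabs_inv, (Rabs_right x) by lra.
    apply (Rmult_le_reg_r x); [lra |]; rewrite Rmult_assoc, Rinv_l by lra.
    assert (Rabs y <= 1/40) by (apply Rabs_le_between; lra); lra. }
  lra.
Qed.

Lemma Log_lipschitz u v : Cmod (u - 1) < 1/40 -> Cmod (v - 1) < 1/40 ->
  Cmod (Log u - Log v) <= 2 * Cmod (u - v) / Cmod v.
Proof.
  intros Hu Hv.
  destruct (Log_near1 u Hu) as [Hu_re Hu_log], (Log_near1 v Hv) as [Hv_re Hv_log].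
  assert (Hv0 : 0 < Cmod v) by (generalize (re_le_Cmod v), (Rle_abs (Re v)); lra).
  set (d := Log u - Log v).
  assert (Hd : Cmod d <= 1/8) by (generalize (Cmod_sub_le (Log u) (Log v)); fold d; lra).
  assert (Hdiff : u - v = v * (Cexp d - 1)).
  { assert (Hu_eq : u = v * Cexp d); [| rewrite Hu_eq; ring].
    rewrite <- (Cexp_Log u Hu_re) at 1; rewrite <- (Cexp_Log v Hv_re) at 1.
    rewrite <- Cexp_add; f_equal; unfold d; ring. }
  rewrite Hdiff, Cmod_mult.
  assert (Hlow := Cexp_sub1_lower d Hd).
  apply (Rmult_le_reg_r (Cmod v)); [lra |]; field_simplify; [nra | lra].
Qed.

(** * Complex derivatives *)

Lemma cderiv_atE (f : C -> C) (z d : C) : cderiv_at f z d <->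
  forall eps, 0 < eps -> exists delta, 0 < delta /\
    forall h, 0 < Cmod h < delta -> Cmod (f (z + h) - f z - h * d) <= eps * Cmod h.
Proof. reflexivity. Qed.

Lemma cderiv_at_small (f : C -> C) (z d : C) : cderiv_at f z d ->
  forall eps, 0 < eps -> exists delta, 0 < delta /\
    forall h, Cmod h < delta -> Cmod (f (z + h) - f z - h * d) <= eps * Cmod h.
Proof.
  rewrite cderiv_atE; intros Hf eps Heps; destruct (Hf eps Heps) as [delta [Hdelta Hsmall]].
  exists delta; split; [exact Hdelta |]; intros h Hh.
  destruct (Rle_lt_or_eq_dec 0 (Cmod h) (Cmod_ge_0 h)) as [Hpos | Hzero]; [apply Hsmall; lra |].
  rewrite <- Hzero; apply eq_sym, Cmod_eq_0 in Hzero; subst h.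
  replace (f (z + 0) - f z - 0 * d) with (RtoC 0) by (rewrite Cplus_0_r; ring).
  rewrite Cmod_0; lra.
Qed.

Lemma cderiv_at_id (z : C) : cderiv_at (fun w => w) z (RtoC 1).
Proof.
  rewrite cderiv_atE; intros eps Heps; exists 1%R; split; [lra |]; intros h _.
  replace (z + h - z - h * 1) with (RtoC 0) by ring.
  rewrite Cmod_0; apply Rmult_le_pos; [lra | apply Cmod_ge_0].
Qed.

Lemma Cexp_cderiv a : cderiv_at Cexp a (Cexp a).
Proof.
  rewrite cderiv_atE; intros eps Heps; set (c := Cmod (Cexp a)).
  assert (Hc : 0 < c) by apply Cmod_Cexp_pos.
  exists (Rmin (1/2) (eps / (4 * c))); split.
  { apply Rmin_pos; [lra | apply Rdiv_lt_0_compat; lra]. }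
  intros h [_ Hh].
  assert (Hh1 := Rlt_le_trans _ _ _ Hh (Rmin_l _ _)).
  assert (Hh2 := Rlt_le_trans _ _ _ Hh (Rmin_r _ _)).
  replace (Cexp (a + h) - Cexp a - h * Cexp a) with (Cexp a * (Cexp h - 1 - h))
    by (rewrite Cexp_add; ring).
  rewrite Cmod_mult; fold c.
  assert (Hq := Cexp_taylor1 h ltac:(lra)).
  assert (0 <= Cmod h) by apply Cmod_ge_0.
  apply Rlt_div_r in Hh2; [| lra].
  apply (Rle_trans _ (c * (4 * Cmod h ^ 2))); [apply Rmult_le_compat_l; lra |].
  simpl; nra.
Qed.

Lemma cderiv_at_comp (f g : C -> C) (z a b : C) : cderiv_at f z a -> cderiv_at g (f z) b ->
  cderiv_at (fun x => g (f x)) z (a * b).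
Proof.
  intros Hf Hg; rewrite cderiv_atE; intros eps Heps.
  set (A := Cmod a); set (B := Cmod b).
  assert (0 <= A) by apply Cmod_ge_0; assert (0 <= B) by apply Cmod_ge_0.
  set (eps_f := Rmin 1 (eps / (2 * (B + 1)))); set (eps_g := (eps / (2 * (A + 1)))%R).
  assert (0 < eps_f) by (apply Rmin_pos; [lra | apply Rdiv_lt_0_compat; lra]).
  assert (0 < eps_g) by (apply Rdiv_lt_0_compat; lra).
  destruct (cderiv_at_small f z a Hf eps_f) as [df [Hdf Hf_small]]; [assumption |].
  destruct (cderiv_at_small g (f z) b Hg eps_g) as [dg [Hdg Hg_small]]; [assumption |].
  exists (Rmin df (dg / (A + 1))); split; [apply Rmin_pos; [lra | apply Rdiv_lt_0_compat; lra] |].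
  intros h [_ Hh].
  assert (Hh_f := Rlt_le_trans _ _ _ Hh (Rmin_l _ _)).
  assert (Hh_g := Rlt_le_trans _ _ _ Hh (Rmin_r _ _)).
  assert (0 <= Cmod h) by apply Cmod_ge_0.
  set (k := f (z + h) - f z).
  assert (Hk_lin : Cmod (k - h * a) <= eps_f * Cmod h) by apply Hf_small, Hh_f.
  assert (Hk : Cmod k <= (A + 1) * Cmod h).
  { assert (eps_f <= 1) by apply Rmin_l.
    generalize (Cmod_sub_ge k (h * a)); rewrite Cmod_mult; fold A; nra. }
  assert (Hk_g : Cmod k < dg) by (apply Rlt_div_r in Hh_g; lra).
  assert (Hg_lin := Hg_small k Hk_g).
  replace (f z + k) with (f (z + h)) in Hg_lin by (unfold k; ring).
  replace (g (f (z + h)) - g (f z) - h * (a * b))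
    with ((g (f (z + h)) - g (f z) - k * b) + (k - h * a) * b) by (unfold k; ring).
  eapply Rle_trans; [apply Cmod_triangle |]; rewrite Cmod_mult; fold B.
  assert (Hg_A : (eps_g * (A + 1) = eps / 2)%R) by (unfold eps_g; field; lra).
  assert (Hf_B : eps_f * B <= eps / 2).
  { apply (Rle_trans _ (eps / (2 * (B + 1)) * (B + 1)));
      [apply Rmult_le_compat; try lra; apply Rmin_r | right; field; lra]. }
  nra.
Qed.

Lemma cderiv_at_inverse (E L : C -> C) (z e : C) (rho K : R) : 0 < rho -> 0 <= K ->
  (forall h, Cmod h < rho -> E (L (z + h)) = z + h) ->
  (forall h, Cmod h < rho -> Cmod (L (z + h) - L z) <= K * Cmod h) ->
  cderiv_at E (L z) e -> e <> 0 -> cderiv_at L z (/ e).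
Proof.
  intros Hrho HK HEL HL HE He; rewrite cderiv_atE; intros eps Heps.
  assert (He_pos : 0 < Cmod e) by (apply Cmod_gt_0; exact He).
  set (eps' := (eps * Cmod e / (K + 1))%R).
  assert (0 < eps') by (apply Rdiv_lt_0_compat; [nra | lra]).
  destruct (cderiv_at_small E (L z) e HE eps') as [dE [HdE HE_small]]; [assumption |].
  exists (Rmin rho (dE / (K + 1))); split; [apply Rmin_pos; [lra | apply Rdiv_lt_0_compat; lra] |].
  intros h [_ Hh].
  assert (Hh_rho := Rlt_le_trans _ _ _ Hh (Rmin_l _ _)).
  assert (Hh_E := Rlt_le_trans _ _ _ Hh (Rmin_r _ _)).
  assert (0 <= Cmod h) by apply Cmod_ge_0.
  set (k := L (z + h) - L z).
  assert (Hk : Cmod k <= K * Cmod h) by (apply HL, Hh_rho).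
  assert (Hk_E : Cmod k < dE) by (apply Rlt_div_r in Hh_E; lra).
  assert (Hlin := HE_small k Hk_E).
  assert (HEz : E (L z) = z)
    by (generalize (HEL 0 ltac:(rewrite Cmod_0; lra)); rewrite !Cplus_0_r; auto).
  replace (L z + k) with (L (z + h)) in Hlin by (unfold k; ring).
  rewrite HEL, HEz in Hlin by exact Hh_rho.
  replace (k - h * / e) with (- (z + h - z - k * e) / e) by (field; exact He).
  rewrite Cmod_div, Cmod_opp by exact He.
  assert (Heps' : (eps' * (K + 1) = eps * Cmod e)%R) by (unfold eps'; field; lra).
  apply Rle_div_l; [exact He_pos |]; nra.
Qed.

(** * Inverse branches along the orbit *)

Lemma Cmod_div_sub1 (w c : C) : c <> 0 -> Cmod (w / c - 1) = (Cmod (w - c) / Cmod c)%R.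
Proof. intros Hc; rewrite <- Cmod_div by exact Hc; f_equal; field; exact Hc. Qed.

Definition log_near (a w : C) : C := a + Log (w / Cexp a).

Section LogNear.
Variables a w : C.
Hypothesis Hw : Cmod (w - Cexp a) < Cmod (Cexp a) / 40.

Lemma log_near_arg : Cmod (w / Cexp a - 1) < 1/40.
Proof.
  rewrite Cmod_div_sub1 by apply Cexp_neq0.
  apply Rlt_div_l; [apply Cmod_Cexp_pos | lra].
Qed.

Lemma Cexp_log_near : Cexp (log_near a w) = w :> C.
Proof.
  destruct (Log_near1 _ log_near_arg) as [Hre _].
  unfold log_near; rewrite Cexp_add, Cexp_Log by exact Hre.
  field; apply Cexp_neq0.
Qed.

Lemma log_near_sub : Cmod (log_near a w - a) <= 2 * Cmod (w - Cexp a) / Cmod (Cexp a).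
Proof.
  assert (H1 : Cmod (1 - 1) < 1/40) by (replace (1 - 1) with (RtoC 0) by ring; rewrite Cmod_0; lra).
  generalize (Log_lipschitz _ _ log_near_arg H1); rewrite Log_1, Cmod_1.
  replace (log_near a w - a) with (Log (w / Cexp a) - 0) by (unfold log_near; ring).
  rewrite Cmod_div_sub1 by apply Cexp_neq0.
  intros Hle; apply (Rle_trans _ _ _ Hle); right; field; generalize (Cmod_Cexp_pos a); lra.
Qed.
End LogNear.

Lemma log_near_cderiv a w : Cmod (w - Cexp a) < Cmod (Cexp a) / 40 ->
  cderiv_at (log_near a) w (/ w).
Proof.
  intros Hw.
  assert (Hw0 : 0 < Cmod w).
  { generalize (Cmod_sub_ge (Cexp a) w) (Cmod_Cexp_pos a); rewrite Cmod_sub_sym; lra. }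
  set (rho := (Cmod (Cexp a) / 40 - Cmod (w - Cexp a))%R).
  assert (Hnear : forall h, Cmod h < rho -> Cmod (w + h - Cexp a) < Cmod (Cexp a) / 40).
  { intros h Hh; replace (w + h - Cexp a) with ((w - Cexp a) + h) by ring.
    generalize (Cmod_triangle (w - Cexp a) h); unfold rho in Hh; lra. }
  assert (HE := Cexp_cderiv (log_near a w)); rewrite Cexp_log_near in HE by exact Hw.
  apply (cderiv_at_inverse Cexp (log_near a) w w rho (2 / Cmod w)); try assumption.
  - unfold rho; lra.
  - apply Rlt_le, Rdiv_lt_0_compat; lra.
  - intros h Hh; apply Cexp_log_near, Hnear, Hh.
  - intros h Hh.
    assert (Hc := Cexp_neq0 a).
    generalize (Log_lipschitz _ _ (log_near_arg _ _ (Hnear h Hh)) (log_near_arg _ _ Hw)).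
    replace (log_near a (w + h) - log_near a w) with (Log ((w + h) / Cexp a) - Log (w / Cexp a))
      by (unfold log_near; ring).
    replace ((w + h) / Cexp a - w / Cexp a) with (h / Cexp a) by (field; exact Hc).
    rewrite !Cmod_div by exact Hc.
    intros Hle; apply (Rle_trans _ _ _ Hle); right; field; generalize (Cmod_Cexp_pos a); lra.
  - apply Cmod_gt_0 in Hw0; exact Hw0.
Qed.

Lemma log_near_center a : log_near a (Cexp a) = a.
Proof.
  unfold log_near; replace (Cexp a / Cexp a) with (RtoC 1) by (field; apply Cexp_neq0).
  rewrite Log_1; ring.
Qed.

Lemma eventually_forall_lt (P : nat -> nat -> Prop) m :
  (forall j, (j < m)%nat -> eventually (P j)) ->
  eventually (fun n => forall j, (j < m)%nat -> P j n).
Proof.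
  induction m as [| m IHm]; intros HP.
  - apply filter_forall; intros n j Hj; lia.
  - apply (filter_imp (fun n => (forall j, (j < m)%nat -> P j n) /\ P m n)).
    + intros n [Hlt Hm] j Hj; destruct (Nat.eq_dec j m) as [-> | Hne]; [exact Hm | apply Hlt; lia].
    + apply filter_and; [apply IHm; intros j Hj; apply HP; lia | apply HP; lia].
Qed.

Lemma eventually_geometric_le c eps : 0 <= c -> 0 < eps ->
  eventually (fun n => c * (1/2) ^ n <= eps).
Proof.
  intros Hc Heps.
  destruct (pow_lt_1_zero (1/2) ltac:(rewrite Rabs_right; lra) (eps / (c + 1)))
    as [N HN]; [apply Rdiv_lt_0_compat; lra |].
  exists N; intros n Hn; specialize (HN n Hn).
  rewrite Rabs_right in HN by (apply Rle_ge, pow_le; lra).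
  apply (Rle_trans _ ((c + 1) * (eps / (c + 1)))); [| right; field; lra].
  apply Rmult_le_compat; try lra; apply pow_le; lra.
Qed.

Section Orbit.
Variable z0 : C.

Definition orbit (k : nat) : C := iter k Cexp z0.

Lemma orbit_S k : orbit (S k) = Cexp (orbit k).
Proof. reflexivity. Qed.

(** [pullback k d] inverts [f^d] near [orbit (k + d)], landing near [orbit k]. *)
Fixpoint pullback (k d : nat) (w : C) : C :=
  match d with
  | O => w
  | S d => log_near (orbit k) (pullback (S k) d w)
  end.

Fixpoint pullback_deriv (k d : nat) (w : C) : C :=
  match d with
  | O => 1
  | S d => pullback_deriv (S k) d w * / pullback (S k) d w
  end.

Fixpoint contraction (k d : nat) : R :=
  match d with
  | O => 1
  | S d => 2 / Cmod (orbit (S k)) * contraction (S k) d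
  end.

(** Each pulled-back image of [D_n] lies in the domain of the next logarithm branch. *)
Definition admissible (n : nat) : Prop :=
  forall j, (1 <= j <= n)%nat -> 2 * PI * contraction j (n - j) <= Cmod (orbit j) / 40.

Lemma pullback_center k d : pullback k d (orbit (k + d)) = orbit k.
Proof.
  revert k; induction d as [| d IHd]; intros k; simpl.
  - rewrite Nat.add_0_r; reflexivity.
  - replace (k + S d)%nat with (S k + d)%nat by lia; rewrite IHd, orbit_S; apply log_near_center.
Qed.

Lemma contraction_ge0 k d : 0 <= contraction k d.
Proof.
  revert k; induction d as [| d IHd]; intros k; simpl; [lra |].
  apply Rmult_le_pos; [apply Rlt_le, Rdiv_lt_0_compat; [lra | apply Cmod_Cexp_pos] | apply IHd].
Qed.

Lemma contraction_add k d e : contraction k (d + e) = (contraction k d * contraction (k + d) e)%R.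
Proof.
  revert k; induction d as [| d IHd]; intros k; simpl.
  - rewrite Nat.add_0_r; ring.
  - rewrite IHd, <- plus_n_Sm; simpl; ring.
Qed.

Lemma contraction_le_pow k d : (forall j, (k < j)%nat -> 4 <= Cmod (orbit j)) ->
  contraction k d <= (1/2) ^ d.
Proof.
  revert k; induction d as [| d IHd]; intros k Hbig; cbn [contraction pow]; [lra |].
  assert (Hk := Hbig (S k) (Nat.lt_succ_diag_r k)).
  apply Rmult_le_compat; [| apply contraction_ge0 | |].
  - apply Rlt_le, Rdiv_lt_0_compat; lra.
  - apply Rle_div_l; lra.
  - apply IHd; intros j Hj; apply Hbig; lia.
Qed.

Lemma pullback_spec n : admissible n -> forall w, Cmod (w - orbit n) < 2 * PI ->
  forall d k, (k + d = n)%nat ->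
    Cmod (pullback k d w - orbit k) < 2 * PI * contraction k d /\
    cderiv_at (pullback k d) w (pullback_deriv k d w) /\
    Cmod (pullback_deriv k d w) <= contraction k d /\
    iter d Cexp (pullback k d w) = w.
Proof.
  intros Hadm w Hw d; induction d as [| d IHd]; intros k Hkd.
  - rewrite Nat.add_0_r in Hkd; subst k; cbn [pullback pullback_deriv contraction].
    rewrite Cmod_1; split; [lra | split; [apply cderiv_at_id | split; [lra | reflexivity]]].
  - destruct (IHd (S k) ltac:(lia)) as [Hdist [Hderiv [Hbound Hiter]]].
    set (p := pullback (S k) d w) in *.
    assert (Hc : 0 < Cmod (orbit (S k))) by apply Cmod_Cexp_pos.
    assert (Hnear : Cmod (p - orbit (S k)) < Cmod (orbit (S k)) / 40).
    { generalize (Hadm (S k) ltac:(lia)); replace (n - S k)%nat with d by lia; lra. }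
    assert (Hp : Cmod (orbit (S k)) / 2 <= Cmod p).
    { generalize (Cmod_sub_ge (orbit (S k)) p); rewrite Cmod_sub_sym; lra. }
    cbn [pullback pullback_deriv contraction]; fold p.
    split; [| split; [| split]].
    + eapply Rle_lt_trans; [apply log_near_sub, Hnear |]; rewrite <- orbit_S.
      replace (2 * PI * (2 / Cmod (orbit (S k)) * contraction (S k) d))%R
        with (2 * (2 * PI * contraction (S k) d) / Cmod (orbit (S k)))%R by (field; lra).
      unfold Rdiv; apply Rmult_lt_compat_r; [apply Rinv_0_lt_compat |]; lra.
    + exact (cderiv_at_comp _ _ _ _ _ Hderiv (log_near_cderiv _ _ Hnear)).
    + assert (Hp0 : p <> RtoC 0) by (apply Cmod_gt_0; lra).
      rewrite Cmod_mult, Cmod_inv, Rmult_comm by exact Hp0.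
      apply Rmult_le_compat;
        [apply Rlt_le, Rinv_0_lt_compat; lra | apply Cmod_ge_0 | | exact Hbound].
      replace (2 / Cmod (orbit (S k)))%R with (/ (Cmod (orbit (S k)) / 2))%R by (field; lra).
      apply Rinv_le_contravar; lra.
    + unfold iter in *; rewrite Nat.iter_succ_r; cbn [Nat.iter].
      rewrite Cexp_log_near by exact Hnear; exact Hiter.
Qed.

Lemma pullback_diam n w w' : admissible n ->
  Cmod (w - orbit n) < 2 * PI -> Cmod (w' - orbit n) < 2 * PI ->
  Cmod (pullback 0 n w - pullback 0 n w') <= 4 * PI * contraction 0 n.
Proof.
  intros Hadm Hw Hw'.
  destruct (pullback_spec n Hadm w Hw n 0 eq_refl) as [Hdist _].
  destruct (pullback_spec n Hadm w' Hw' n 0 eq_refl) as [Hdist' _].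
  generalize (Cmod_sub_triangle (pullback 0 n w) (orbit 0) (pullback 0 n w')).
  rewrite (Cmod_sub_sym (orbit 0)); lra.
Qed.

Section Escaping.
Variable m : nat.
(* 80 pi = 40 * 2 pi: from [m] on, [D_j] itself fits in the branch domain. *)
Hypothesis Hbig : forall j, (m <= j)%nat -> 80 * PI <= Cmod (orbit j).

Let big_orbit j : (m <= j)%nat -> 4 <= Cmod (orbit j).
Proof. intros Hj; generalize (Hbig j Hj) PI2_3_2; lra. Qed.

Lemma contraction_vanishes k eps : 0 < eps -> eventually (fun n => contraction k (n - k) <= eps).
Proof.
  intros Heps; set (c := contraction k m).
  destruct (eventually_geometric_le c eps (contraction_ge0 k m) Heps) as [N HN].
  exists (k + m + N)%nat; intros n Hn.
  replace (n - k)%nat with (m + (n - k - m))%nat by lia.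
  rewrite contraction_add; fold c.
  apply (Rle_trans _ (c * (1/2) ^ (n - k - m))); [| apply HN; lia].
  apply Rmult_le_compat_l; [apply contraction_ge0 |].
  apply contraction_le_pow; intros j Hj; apply big_orbit; lia.
Qed.

Lemma admissible_eventually : eventually admissible.
Proof.
  assert (Hearly : eventually (fun n => forall j, (j < m)%nat -> (1 <= j)%nat ->
            2 * PI * contraction j (n - j) <= Cmod (orbit j) / 40)).
  { apply eventually_forall_lt; intros [| j] _.
    - apply filter_forall; intros n Hj; lia.
    - assert (Hj : 0 < Cmod (orbit (S j))) by apply Cmod_Cexp_pos.
      apply (filter_imp (fun n => contraction (S j) (n - S j) <= Cmod (orbit (S j)) / (80 * PI))).
      + intros n Hn _; apply (Rmult_le_compat_l (2 * PI)) in Hn; [| generalize PI_RGT_0; lra].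
        apply (Rle_trans _ _ _ Hn); right; field; generalize PI_RGT_0; lra.
      + apply contraction_vanishes, Rdiv_lt_0_compat; generalize PI_RGT_0; lra. }
  revert Hearly; apply filter_imp; intros n Hn j Hj.
  destruct (Nat.lt_ge_cases j m) as [Hjm | Hjm]; [apply Hn; lia |].
  assert (contraction j (n - j) <= 1).
  { apply (Rle_trans _ _ _ (contraction_le_pow j (n - j) (fun i Hi => big_orbit i ltac:(lia)))).
    generalize (pow_incr (1/2) 1 (n - j) ltac:(lra)); rewrite pow1; lra. }
  assert (PI * contraction j (n - j) <= PI * 1)
    by (apply Rmult_le_compat_l; generalize PI_RGT_0; lra).
  generalize (Hbig j Hjm); lra.
Qed.

End Escaping.
End Orbit.

Close Scope C_scope.

Theorem mainTheorem10 (z0 : Cplx) (Hesc : escapes Cexp z0) :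
  exists (n0 : nat) (phi : nat -> Cplx -> Cplx) (dphi : nat -> Cplx -> Cplx),
    (forall n, (n0 <= n)%nat -> forall z, in_disc (2 * PI) (iter n Cexp z0) z ->
        cderiv_at (phi n) z (dphi n z)) /\
    (forall n, (n0 <= n)%nat -> phi n (iter n Cexp z0) = z0) /\
    (forall n, (n0 <= n)%nat -> forall z, in_disc (2 * PI) (iter n Cexp z0) z ->
        iter n Cexp (phi n z) = z) /\
    (forall eps, 0 < eps -> exists N, forall n, (N <= n)%nat -> (n0 <= n)%nat ->
        forall z, in_disc (2 * PI) (iter n Cexp z0) z -> Cmod (dphi n z) <= eps) /\
    (forall eps, 0 < eps -> exists N, forall n, (N <= n)%nat -> (n0 <= n)%nat ->
        forall z w, in_disc (2 * PI) (iter n Cexp z0) z ->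
          in_disc (2 * PI) (iter n Cexp z0) w ->
          Cmod (Csub (phi n z) (phi n w)) <= eps).
Proof.
  destruct (Hesc (80 * PI)) as [m Hm].
  assert (Hbig : forall j, (m <= j)%nat -> 80 * PI <= Cmod (orbit z0 j))
    by (intros j Hj; apply Rlt_le, Hm, Hj).
  destruct (admissible_eventually z0 m Hbig) as [n0 Hn0].
  assert (Hspec := fun n Hn w Hw => pullback_spec z0 n (Hn0 n Hn) w Hw n 0 eq_refl).
  assert (Hsmall : forall eps, 0 < eps -> eventually (fun n => contraction z0 0 n <= eps)).
  { intros eps Heps; destruct (contraction_vanishes z0 m Hbig 0 eps Heps) as [N HN].
    exists N; intros n Hn; specialize (HN n Hn); rewrite Nat.sub_0_r in HN; exact HN. }
  exists n0, (pullback z0 0), (pullback_deriv z0 0).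
  split; [| split; [| split; [| split]]].
  - intros n Hn z Hz; apply (Hspec n Hn z Hz).
  - intros n Hn; exact (pullback_center z0 0 n).
  - intros n Hn z Hz; apply (Hspec n Hn z Hz).
  - intros eps Heps; destruct (Hsmall eps Heps) as [N HN]; exists N; intros n HnN Hn z Hz.
    destruct (Hspec n Hn z Hz) as [_ [_ [Hderiv _]]]; specialize (HN n HnN); lra.
  - intros eps Heps; destruct (Hsmall (eps / (4 * PI))) as [N HN].
    { apply Rdiv_lt_0_compat; generalize PI_RGT_0; lra. }
    exists N; intros n HnN Hn z w Hz Hw; specialize (HN n HnN).
    apply (Rle_trans _ _ _ (pullback_diam z0 n z w (Hn0 n Hn) Hz Hw)).
    apply (Rle_trans _ (4 * PI * (eps / (4 * PI))));
      [apply Rmult_le_compat_l | right; field]; generalize PI_RGT_0; lra.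
Qed.
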